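(* Let $k\ge1$ be an integer and $\rho\in(0,1)$. Let $\beta=\frac{1-\sqrt{1-\rho}}{1+\sqrt{1-\rho}}$, $\rho_*=\frac{2\beta^k}{1+\beta^{2k}}$, $\beta_\rho=\frac{\sqrt{1+\rho}-\sqrt{1-\rho}}{\sqrt{1+\rho}+\sqrt{1-\rho}}$, $\rho_1=\frac{2\beta_\rho^k}{1+\beta_\rho^{2k}}$, $$C_*=\frac{\rho_*}{2\rho^k}\Big(\big(2+\rho-2\sqrt{1+\rho}\big)^k+\big(2+\rho+2\sqrt{1+\rho}\big)^k\Big),\qquad C_1=\frac{\rho_1}{2\rho^k}\Big(\big(1-\sqrt{1+\rho^2}\big)^k+\big(1+\sqrt{1+\rho^2}\big)^k\Big).$$ Then $\frac{2+\rho^k}{2-\rho^k}\le C_1$ whenever $k>1$, and $C_1\le C_*$ for all $k\ge1$. *)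

From Stdlib Require Import Reals.
Open Scope R_scope.

Definition beta (rho : R) : R := (1 - sqrt (1 - rho)) / (1 + sqrt (1 - rho)).
Definition rho_star (k : nat) (rho : R) : R :=
  2 * beta rho ^ k / (1 + beta rho ^ (2 * k)).
Definition beta_rho (rho : R) : R :=
  (sqrt (1 + rho) - sqrt (1 - rho)) / (sqrt (1 + rho) + sqrt (1 - rho)).
Definition rho_1 (k : nat) (rho : R) : R :=
  2 * beta_rho rho ^ k / (1 + beta_rho rho ^ (2 * k)).
Definition C_star (k : nat) (rho : R) : R :=
  rho_star k rho / (2 * rho ^ k) *
  ((2 + rho - 2 * sqrt (1 + rho)) ^ k + (2 + rho + 2 * sqrt (1 + rho)) ^ k).
Definition C_1 (k : nat) (rho : R) : R :=
  rho_1 k rho / (2 * rho ^ k) *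
  ((1 - sqrt (1 + rho ^ 2)) ^ k + (1 + sqrt (1 + rho ^ 2)) ^ k).

From Stdlib Require Import Reals Lra Lia Psatz.
Open Scope R_scope.

(* Put a = sqrt (1 - rho), b = sqrt (1 + rho), c = sqrt (1 + rho^2) and
   y = (1 + c) / rho,  z = (b + a) / (b - a),  w = (1 + a) / (1 - a),  g = (b + 1) / (b - 1),
   so that beta_rho = 1/z, beta = 1/w and y - 1/y = z + 1/z = 2/rho.  Then
   C_1 = (y^k + (-1)^k y^-k) / (z^k + z^-k)  and  C_* = (g^k + g^-k) / (w^k + w^-k).
   For s <= 1 the ratio (Y + s/Y) / (Z + 1/Z) does not decrease when Y and Z (with 1 <= Z <= Y)
   are multiplied by factors a >= b >= 1.  With a = y^2, b = z^2 this makes C_1 increase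
   along k of fixed parity, so for k >= 2 it is at least min (C_1 2, C_1 3) = C_1 2
   = (2 + rho^2) / (2 - rho^2); with a = g^k / y^k, b = w^k / z^k it gives C_1 <= C_*,
   the required a >= b being y w <= g z. *)

Lemma Rdiv_le_cross (p q u v : R) : 0 < q -> 0 < v -> p * v <= u * q -> p / q <= u / v.
Proof.
  intros q_pos v_pos H.
  replace (p / q) with (u / v + (p * v - u * q) * / (q * v)) by (field; lra).
  assert (0 < / (q * v)) by (apply Rinv_0_lt_compat; nra).
  nra.
Qed.

Lemma pow_neg1_le_1 (n : nat) : (-1) ^ n <= 1.
Proof. rewrite <- (pow_1_abs n). apply Rle_abs. Qed.

Lemma add_inv_pos (x : R) : 0 < x -> 0 < x + / x.
Proof. intro x_pos. assert (0 < / x) by (apply Rinv_0_lt_compat; lra). lra. Qed.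

Lemma add_inv_sq_ge4 (x : R) : 0 < x -> 4 <= (x + / x) ^ 2.
Proof.
  intro x_pos. replace ((x + / x) ^ 2) with ((x - / x) ^ 2 + 4) by (field; lra).
  pose proof (pow2_ge_0 (x - / x)). lra.
Qed.

Lemma le_of_sub_inv_eq_add_inv (y z : R) : 0 < y -> y - / y = z + / z -> z <= y.
Proof.
  intros y_pos E. assert (0 < / y) by (apply Rinv_0_lt_compat; lra).
  destruct (Rle_or_lt z 0) as [z_npos | z_pos]; [lra|].
  assert (0 < / z) by (apply Rinv_0_lt_compat; lra). lra.
Qed.

(* With Y = e^t and Z = e^u this is cosh t / cosh u for s = 1 and sinh t / cosh u for s = -1. *)
Definition cosh_ratio (s Y Z : R) : R := (Y + s / Y) / (Z + / Z).

Lemma cosh_ratio_le_sign (s t Y Z : R) :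
  0 < Y -> 0 < Z -> s <= t -> cosh_ratio s Y Z <= cosh_ratio t Y Z.
Proof.
  intros Y_pos Z_pos st. unfold cosh_ratio, Rdiv.
  apply Rmult_le_compat_r; [left; apply Rinv_0_lt_compat, add_inv_pos; lra|].
  assert (0 < / Y) by (apply Rinv_0_lt_compat; lra). nra.
Qed.

Lemma cosh_ratio_le_scale (s Y Z a b : R) :
  s <= 1 -> 1 <= Z <= Y -> 1 <= b <= a ->
  cosh_ratio s Y Z <= cosh_ratio s (a * Y) (b * Z).
Proof.
  intros s_le1 [Z_ge1 ZY] [b_ge1 ba]. unfold cosh_ratio.
  apply Rdiv_le_cross; [apply add_inv_pos; nra .. |].
  assert (bZ2_le : b * (Z * Z) <= a * (Y * Y)) by (apply Rmult_le_compat; nra).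
  assert (ab_ge1 : 1 <= a * b) by nra.
  assert (1 <= Y * Y) by nra. assert (1 <= Z * Z) by nra.
  assert (1 <= Y * Y * (Z * Z)) by nra.
  assert (one_le : 1 <= a * b * (Y * Y * (Z * Z))) by nra.
  assert (E : (a * Y + s / (a * Y)) * (Z + / Z) - (Y + s / Y) * (b * Z + / (b * Z))
              = ((a - b) * (a * b * (Y * Y * (Z * Z)) - s)
                 + (a * b - 1) * ((a * (Y * Y) - b * (Z * Z)) + (1 - s) * (b * (Z * Z))))
                * / (a * b * Y * Z))
    by (field; repeat split; lra).
  assert (0 < / (a * b * Y * Z)).
  { apply Rinv_0_lt_compat. repeat apply Rmult_lt_0_compat; lra. }
  assert (0 <= (a - b) * (a * b * (Y * Y * (Z * Z)) - s)) by (apply Rmult_le_pos; lra).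
  assert (0 <= (a * b - 1) * ((a * (Y * Y) - b * (Z * Z)) + (1 - s) * (b * (Z * Z)))).
  { apply Rmult_le_pos; [lra|].
    assert (0 <= (1 - s) * (b * (Z * Z))) by (apply Rmult_le_pos; nra). lra. }
  nra.
Qed.

Lemma cosh_ratio_mono (s Y Z G W : R) :
  s <= 1 -> 1 <= Z <= Y -> Z <= W -> Y * W <= G * Z ->
  cosh_ratio s Y Z <= cosh_ratio s G W.
Proof.
  intros s_le1 [Z_ge1 ZY] ZW YW_le.
  replace G with (G / Y * Y) by (field; lra).
  replace W with (W / Z * Z) by (field; lra).
  apply cosh_ratio_le_scale; [assumption | lra | split].
  - apply (Rmult_le_reg_r Z); [lra|]. unfold Rdiv. rewrite Rmult_assoc, Rinv_l; lra.
  - apply Rdiv_le_cross; lra.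
Qed.

Definition alt_ratio (y z : R) (n : nat) : R := cosh_ratio ((-1) ^ n) (y ^ n) (z ^ n).

Lemma alt_ratio_le_add_even (y z : R) (m j : nat) :
  1 <= z <= y -> alt_ratio y z m <= alt_ratio y z (m + 2 * j).
Proof.
  intros [z_ge1 zy]. unfold alt_ratio.
  rewrite (pow_add (-1)), pow_1_even, Rmult_1_r.
  assert (zm_ge1 : 1 <= z ^ m) by (apply pow_R1_Rle; lra).
  assert (zm_le : z ^ m <= y ^ m) by (apply pow_incr; lra).
  apply cosh_ratio_mono; [apply pow_neg1_le_1 | lra | apply Rle_pow; [lra | lia] |].
  rewrite !pow_add.
  assert (z ^ (2 * j) <= y ^ (2 * j)) by (apply pow_incr; lra).
  assert (0 <= y ^ m * z ^ m) by nra.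
  nra.
Qed.

Lemma alt_ratio_two (y z : R) :
  0 < y -> 0 < z -> y - / y = z + / z ->
  alt_ratio y z 2 = ((z + / z) ^ 2 + 2) / ((z + / z) ^ 2 - 2).
Proof.
  intros y_pos z_pos E. unfold alt_ratio, cosh_ratio.
  rewrite <- E at 1. f_equal; [field | field_simplify_eq]; lra.
Qed.

Lemma alt_ratio_three (y z : R) :
  0 < y -> 0 < z -> y - / y = z + / z ->
  alt_ratio y z 3 = ((z + / z) ^ 2 + 3) / ((z + / z) ^ 2 - 3).
Proof.
  intros y_pos z_pos E. unfold alt_ratio, cosh_ratio.
  assert (m_pos : 0 < z + / z) by (apply add_inv_pos; lra).
  pose proof (add_inv_sq_ge4 z z_pos).
  replace (y ^ 3 + (-1) ^ 3 / y ^ 3) with ((y - / y) * ((y - / y) ^ 2 + 3)) by (field; lra).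
  replace (z ^ 3 + / z ^ 3) with ((z + / z) * ((z + / z) ^ 2 - 3)) by (field; lra).
  rewrite E. set (m := z + / z) in *. field. split; lra.
Qed.

Lemma alt_ratio_two_le (y z : R) (k : nat) :
  0 < y -> 1 <= z -> y - / y = z + / z -> (2 <= k)%nat ->
  alt_ratio y z 2 <= alt_ratio y z k.
Proof.
  intros y_pos z_ge1 E k_ge2.
  assert (zy : 1 <= z <= y) by (split; [lra | apply le_of_sub_inv_eq_add_inv; assumption]).
  destruct (Nat.Even_or_Odd k) as [[j ->] | [j ->]].
  - replace (2 * j)%nat with (2 + 2 * (j - 1))%nat by lia.
    apply alt_ratio_le_add_even; assumption.
  - replace (2 * j + 1)%nat with (3 + 2 * (j - 1))%nat by lia.
    eapply Rle_trans; [| apply alt_ratio_le_add_even; exact zy].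
    rewrite alt_ratio_two, alt_ratio_three by lra.
    pose proof (add_inv_sq_ge4 z ltac:(lra)).
    apply Rdiv_le_cross; nra.
Qed.

Lemma two_add_div_two_sub_le (t u : R) :
  0 <= t <= u -> u < 2 -> (2 + t) / (2 - t) <= (2 + u) / (2 - u).
Proof. intros. apply Rdiv_le_cross; nra. Qed.

Lemma inv_pow_ratio_form (k : nat) (rho x p q : R) : 0 < rho -> 0 < x ->
  2 * (/ x) ^ k / (1 + (/ x) ^ (2 * k)) / (2 * rho ^ k) * ((rho * p) ^ k + (rho * q) ^ k)
  = (q ^ k + p ^ k) / (x ^ k + / x ^ k).
Proof.
  intros rho_pos x_pos.
  replace (2 * k)%nat with (k + k)%nat by lia.
  rewrite pow_add, !Rpow_mult_distr, !pow_inv.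
  assert (0 < x ^ k) by (apply pow_lt; lra).
  assert (0 < rho ^ k) by (apply pow_lt; lra).
  field. repeat split; nra.
Qed.

Section Parametrization.

Variables rho a b c : R.
Hypotheses (rho_pos : 0 < rho) (rho_lt1 : rho < 1).
Hypotheses (a_ge0 : 0 <= a) (a_sq : a * a = 1 - rho).
Hypotheses (b_ge0 : 0 <= b) (b_sq : b * b = 1 + rho).
Hypotheses (c_ge0 : 0 <= c) (c_sq : c * c = 1 + rho ^ 2).

Local Notation y := ((1 + c) / rho).
Local Notation z := ((b + a) / (b - a)).
Local Notation w := ((1 + a) / (1 - a)).
Local Notation g := ((b + 1) / (b - 1)).

Let a_lt1 : a < 1. Proof. nra. Qed.
Let b_gt1 : 1 < b. Proof. nra. Qed.

Lemma y_pos : 0 < y.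
Proof. apply Rdiv_lt_0_compat; lra. Qed.

Lemma z_ge1 : 1 <= z.
Proof. apply (Rmult_le_reg_r (b - a)); [lra|]. field_simplify; lra. Qed.

Let z_pos : 0 < z.
Proof. pose proof z_ge1; lra. Qed.

Lemma y_sub_inv : y - / y = 2 / rho.
Proof. field_simplify_eq; [nra | split; nra]. Qed.

Lemma z_add_inv : z + / z = 2 / rho.
Proof.
  field_simplify_eq; [| repeat split; lra].
  replace (b ^ 2) with (1 + rho) by lra. replace (a ^ 2) with (1 - rho) by lra. ring.
Qed.

Lemma y_sub_inv_eq : y - / y = z + / z.
Proof. rewrite y_sub_inv, z_add_inv. reflexivity. Qed.

Lemma z_le_y : z <= y.
Proof. apply le_of_sub_inv_eq_add_inv; [apply y_pos | apply y_sub_inv_eq]. Qed.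

Lemma z_le_w : z <= w.
Proof. apply Rdiv_le_cross; nra. Qed.

Lemma y_mul_w_le : y * w <= g * z.
Proof.
  assert (w_eq : w = (1 + a) ^ 2 / rho).
  { field_simplify_eq; [| lra]. replace rho with (1 - a * a) by lra. ring. }
  assert (g_eq : g = (b + 1) ^ 2 / rho).
  { field_simplify_eq; [| lra]. replace rho with (b * b - 1) by lra. ring. }
  assert (z_eq : z = (b + a) ^ 2 / (2 * rho)).
  { field_simplify_eq; [| lra]. replace rho with ((b * b - a * a) / 2) by lra. field. }
  rewrite w_eq, g_eq, z_eq.
  replace ((1 + c) / rho * ((1 + a) ^ 2 / rho))
    with (2 * (1 + c) * (1 + a) ^ 2 / (2 * rho ^ 2)) by (field; lra).
  replace ((b + 1) ^ 2 / rho * ((b + a) ^ 2 / (2 * rho)))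
    with ((b + 1) ^ 2 * (b + a) ^ 2 / (2 * rho ^ 2)) by (field; lra).
  unfold Rdiv. apply Rmult_le_compat_r; [left; apply Rinv_0_lt_compat; nra|].
  assert (c_le : 2 * (1 + c) <= 4 + rho ^ 2) by nra.
  assert (ab_ge : (4 + rho ^ 2) * (1 + a) ^ 2 <= 4 * (b + a) ^ 2).
  { replace ((1 + a) ^ 2) with (2 - rho + 2 * a) by nra.
    replace ((b + a) ^ 2) with (2 + 2 * a * b) by nra.
    assert (0 <= a * (b - 1)) by nra. assert (a * rho ^ 2 <= rho ^ 2) by nra. nra. }
  assert (4 <= (b + 1) ^ 2) by nra.
  assert (0 <= (1 + a) ^ 2) by nra. assert (0 <= (b + a) ^ 2) by nra.
  nra.
Qed.

Lemma C_1_eq (k : nat) : C_1 k rho = alt_ratio y z k.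
Proof.
  unfold C_1, rho_1, beta_rho.
  rewrite (sqrt_lem_1 (1 - rho) a), (sqrt_lem_1 (1 + rho) b), (sqrt_lem_1 (1 + rho ^ 2) c)
    by (assumption || nra).
  replace ((b - a) / (b + a)) with (/ z) by (field; lra).
  replace (1 - c) with (rho * (-1 * / y)) by (field_simplify_eq; [nra | lra]).
  replace (1 + c) with (rho * y) at 2 by (field; lra).
  rewrite inv_pow_ratio_form by assumption.
  unfold alt_ratio, cosh_ratio.
  rewrite Rpow_mult_distr, pow_inv. f_equal; lra.
Qed.

Lemma C_star_eq (k : nat) : C_star k rho = cosh_ratio 1 (g ^ k) (w ^ k).
Proof.
  unfold C_star, rho_star, beta.
  rewrite (sqrt_lem_1 (1 - rho) a), (sqrt_lem_1 (1 + rho) b) by (assumption || lra).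
  replace ((1 - a) / (1 + a)) with (/ w) by (field; lra).
  replace (2 + rho - 2 * b) with (rho * / g) by (replace rho with (b * b - 1) by lra; field; lra).
  replace (2 + rho + 2 * b) with (rho * g) by (replace rho with (b * b - 1) by lra; field; lra).
  rewrite inv_pow_ratio_form by (lra || apply Rdiv_lt_0_compat; lra).
  unfold cosh_ratio. rewrite pow_inv. f_equal; unfold Rdiv; lra.
Qed.

Lemma C_1_lower_bound (k : nat) : (1 < k)%nat -> (2 + rho ^ k) / (2 - rho ^ k) <= C_1 k rho.
Proof.
  intro k_gt1. rewrite C_1_eq.
  apply Rle_trans with (alt_ratio y z 2);
    [| apply alt_ratio_two_le; auto using y_pos, z_ge1, y_sub_inv_eq].
  rewrite alt_ratio_two, z_add_inv by auto using y_pos, y_sub_inv_eq.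
  replace (((2 / rho) ^ 2 + 2) / ((2 / rho) ^ 2 - 2)) with ((2 + rho ^ 2) / (2 - rho ^ 2))
    by (field; split; nra).
  apply two_add_div_two_sub_le; [| nra].
  replace k with (2 + (k - 2))%nat by lia. rewrite pow_add.
  assert (0 < rho ^ (k - 2)) by (apply pow_lt; lra).
  assert (rho ^ (k - 2) <= 1) by (rewrite <- (pow1 (k - 2)); apply pow_incr; lra).
  split; nra.
Qed.

Lemma C_1_le_C_star (k : nat) : C_1 k rho <= C_star k rho.
Proof.
  rewrite C_1_eq, C_star_eq. unfold alt_ratio.
  pose proof z_ge1. pose proof z_le_y. pose proof z_le_w. pose proof y_mul_w_le.
  apply Rle_trans with (cosh_ratio 1 (y ^ k) (z ^ k)).
  - apply cosh_ratio_le_sign; [apply pow_lt; lra .. | apply pow_neg1_le_1].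
  - apply cosh_ratio_mono; [lra | split; [apply pow_R1_Rle | apply pow_incr]; lra
                           | apply pow_incr; lra |].
    rewrite <- !Rpow_mult_distr. apply pow_incr. split; [| lra].
    apply Rmult_le_pos; [left; apply y_pos | lra].
Qed.

End Parametrization.

Theorem lemma7 (k : nat) (rho : R) (hk : (1 <= k)%nat) (hrho : 0 < rho < 1) :
  ((1 < k)%nat -> (2 + rho ^ k) / (2 - rho ^ k) <= C_1 k rho) /\
  C_1 k rho <= C_star k rho.
Proof.
  destruct hrho as [rho_pos rho_lt1].
  pose proof (sqrt_pos (1 - rho)). pose proof (sqrt_pos (1 + rho)).
  pose proof (sqrt_pos (1 + rho ^ 2)).
  assert (sqrt (1 - rho) * sqrt (1 - rho) = 1 - rho) by (apply sqrt_sqrt; lra).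
  assert (sqrt (1 + rho) * sqrt (1 + rho) = 1 + rho) by (apply sqrt_sqrt; lra).
  assert (sqrt (1 + rho ^ 2) * sqrt (1 + rho ^ 2) = 1 + rho ^ 2) by (apply sqrt_sqrt; nra).
  split.
  - apply (C_1_lower_bound rho (sqrt (1 - rho)) (sqrt (1 + rho)) (sqrt (1 + rho ^ 2))); assumption.
  - apply (C_1_le_C_star rho (sqrt (1 - rho)) (sqrt (1 + rho)) (sqrt (1 + rho ^ 2))); assumption.
Qed.
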